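(* Let $Q$ be a finitely generated $\Lambda_R$-module and let $\mathfrak p=(g)$ be a principal prime ideal of $\Lambda_R$. Assume that $Q/\mathfrak p Q$ is a pseudo-null $\Lambda_R$-module. Let $S$ be the maximal pseudo-null $\Lambda_R$-submodule of $Q$. Then the $\mathfrak p$-torsion submodule $Q[\mathfrak p]$ of $Q$ coincides with (in particular is isomorphic to) $S[\mathfrak p]$.
   Context: Fix a prime $p$. $R$ is a complete noetherian regular local ring with maximal ideal $\mathfrak m_R$, of Krull dimension $d\ge 1$, with finite residue field of characteristic $p$. $G_\infty\simeq\mathbb Z_p$ is a pro-$p$ group with topological generator $\gamma$, $G_n=G_\infty/G_\infty^{p^n}\simeq \mathbb Z/p^n\mathbb Z$, and $\Lambda_R=R[[G_\infty]]=\varprojlim_n R[G_n]$ (isomorphic to $R[[X]]$ via $\gamma\mapsto 1+X$; it is a complete noetherian regular local ring, hence a UFD). A finitely generated $\Lambda_R$-module is pseudo-null if every prime ideal in its support has height at least $2$. For an ideal $I$ and a module $M$, $M[I]$ denotes the submodule of elements killed by $I$. *)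

From HB Require Import structures.
From mathcomp Require Import all_boot all_order all_algebra.
From mathcomp Require Import boolp.

Set Implicit Arguments.
Unset Strict Implicit.
Unset Printing Implicit Defensive.

Import Order.TTheory GRing.Theory.
Local Open Scope ring_scope.

(* Lambda_R = R[[G_oo]] is identified with R[[X]] via gamma |-> 1 + X.       *)
Section PowerSeries.
Variable R : comNzRingType.

Variant pser : Type := PSer of nat -> R.

Definition pscoef (f : pser) : nat -> R := let: PSer c := f in c.

Lemma pserP (f g : pser) : (forall n, pscoef f n = pscoef g n) -> f = g.
Proof.
case: f g => [f] [g] /= H; congr PSer; exact: funext.
Qed.

HB.instance Definition _ := gen_eqMixin pser.
HB.instance Definition _ := gen_choiceMixin pser.

Definition ps_zero : pser := PSer (fun _ => 0).
Definition ps_add (f g : pser) : pser := PSer (fun n => pscoef f n + pscoef g n).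
Definition ps_opp (f : pser) : pser := PSer (fun n => - pscoef f n).

Lemma ps_addA : associative ps_add.
Proof. by move=> f g h; apply: pserP => n /=; rewrite addrA. Qed.
Lemma ps_addC : commutative ps_add.
Proof. by move=> f g; apply: pserP => n /=; rewrite addrC. Qed.
Lemma ps_add0 : left_id ps_zero ps_add.
Proof. by move=> f; apply: pserP => n /=; rewrite add0r. Qed.
Lemma ps_addN : left_inverse ps_zero ps_opp ps_add.
Proof. by move=> f; apply: pserP => n /=; rewrite addNr. Qed.

HB.instance Definition _ :=
  GRing.isZmodule.Build pser ps_addA ps_addC ps_add0 ps_addN.

Definition ps_trunc (n : nat) (f : pser) : {poly R} := \poly_(i < n.+1) pscoef f i.

Definition ps_mul (f g : pser) : pser :=
  PSer (fun n => (ps_trunc n f * ps_trunc n g)`_n).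
Definition ps_one : pser := PSer (fun n => (n == 0)%:R).
(* the variable X (corresponds to gamma - 1) *)
Definition ps_X : pser := PSer (fun n => (n == 1)%:R).

Lemma coefM_take (p q : {poly R}) n :
  (p * q)`_n = (take_poly n.+1 p * take_poly n.+1 q)`_n.
Proof.
rewrite !coefM; apply: eq_bigr => j _.
by rewrite !coef_take_poly ltn_ord ltnS leq_subr.
Qed.

Lemma take_trunc i n f : (i <= n)%N ->
  take_poly i.+1 (ps_trunc n f) = ps_trunc i f.
Proof.
move=> le_in; apply/polyP => k; rewrite coef_take_poly !coef_poly.
case: ifP => // lt_ki; suff -> : (k < n.+1)%N by [].
by apply: leq_trans lt_ki _; rewrite ltnS.
Qed.

Lemma trunc_mul n f g :
  ps_trunc n (ps_mul f g) = take_poly n.+1 (ps_trunc n f * ps_trunc n g).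
Proof.
apply/polyP => i; rewrite coef_take_poly coef_poly /=.
case: ifP => // lt_in.
by rewrite [RHS]coefM_take !take_trunc.
Qed.

Lemma take_take m (p : {poly R}) : take_poly m (take_poly m p) = take_poly m p.
Proof. by rewrite take_poly_id // size_take_poly. Qed.

Lemma coefM_takel (p q : {poly R}) n :
  (take_poly n.+1 p * q)`_n = (p * q)`_n.
Proof. by rewrite [LHS]coefM_take take_take -coefM_take. Qed.

Lemma coefM_taker (p q : {poly R}) n :
  (p * take_poly n.+1 q)`_n = (p * q)`_n.
Proof. by rewrite [LHS]coefM_take take_take -coefM_take. Qed.

Lemma ps_mulA : associative ps_mul.
Proof.
move=> f g h; apply: pserP => n /=.
by rewrite !trunc_mul coefM_takel coefM_taker mulrA.
Qed.

Lemma ps_mulC : commutative ps_mul.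
Proof. by move=> f g; apply: pserP => n /=; rewrite mulrC. Qed.

Lemma trunc_one n : ps_trunc n ps_one = 1.
Proof.
apply/polyP => i; rewrite coef_poly coef1 /=.
case: ifP => // /negbT; rewrite -leqNgt => lt_ni.
by case: i lt_ni.
Qed.

Lemma ps_mul1 : left_id ps_one ps_mul.
Proof.
move=> f; apply: pserP => n /=.
by rewrite trunc_one mul1r coef_poly ltnSn.
Qed.

Lemma trunc_add n f g : ps_trunc n (ps_add f g) = ps_trunc n f + ps_trunc n g.
Proof.
apply/polyP => i; rewrite coefD !coef_poly /=.
by case: ifP => //; rewrite addr0.
Qed.

Lemma ps_mulDl : left_distributive ps_mul ps_add.
Proof.
move=> f g h; apply: pserP => n /=.
by rewrite trunc_add mulrDl coefD.
Qed.

Lemma ps_one_neq0 : ps_one != ps_zero.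
Proof.
apply/eqP => /(congr1 (fun f => pscoef f 0)) /=.
by move/eqP; rewrite oner_eq0.
Qed.

HB.instance Definition _ :=
  GRing.Zmodule_isComNzRing.Build pser ps_mulA ps_mulC ps_mul1 ps_mulDl
    ps_one_neq0.

End PowerSeries.

Notation Lambda R := (pser R).

Section CommAlg.
Variable A : comNzRingType.

Definition is_ideal (I : A -> Prop) : Prop :=
  [/\ I 0, (forall x y, I x -> I y -> I (x + y)) & (forall a x, I x -> I (a * x))].

Definition prime_ideal (I : A -> Prop) : Prop :=
  [/\ is_ideal I, ~ I 1 & (forall a b, I (a * b) -> I a \/ I b)].

Definition maximal_ideal (I : A -> Prop) : Prop :=
  [/\ is_ideal I, ~ I 1 &
      (forall J, is_ideal J -> (forall x, I x -> J x) -> ~ J 1 ->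
         forall x, J x -> I x)].

Definition ideal_gen (s : seq A) (x : A) : Prop :=
  exists c : 'I_(size s) -> A, x = \sum_(i < size s) c i * s`_i.

Definition principal_ideal (g : A) (x : A) : Prop := exists a, x = a * g.

Definition noetherian_ring : Prop :=
  forall I, is_ideal I -> exists s : seq A, forall x, I x <-> ideal_gen s x.

Definition local_ring (m : A -> Prop) : Prop :=
  maximal_ideal m /\ (forall J, maximal_ideal J -> forall x, J x <-> m x).

Definition strict_sub (I J : A -> Prop) : Prop :=
  (forall x, I x -> J x) /\ exists x, J x /\ ~ I x.

Definition height_ge (P : A -> Prop) (n : nat) : Prop :=
  exists c : nat -> (A -> Prop),
    [/\ forall i, (i <= n)%N -> prime_ideal (c i),
        forall i, (i < n)%N -> strict_sub (c i) (c i.+1) &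
        forall x, c n x <-> P x].

Definition krull_dim (d : nat) : Prop :=
  (exists P, prime_ideal P /\ height_ge P d) /\
  ~ (exists P, prime_ideal P /\ height_ge P d.+1).

Definition regular_local_ring (m : A -> Prop) (d : nat) : Prop :=
  [/\ noetherian_ring, local_ring m, krull_dim d &
      exists s : seq A, size s = d /\ forall x, m x <-> ideal_gen s x].

Fixpoint ideal_pow (I : A -> Prop) (n : nat) : A -> Prop :=
  match n with
  | 0 => fun _ => True
  | n'.+1 => fun x => exists k (a b : 'I_k -> A),
       [/\ forall i, I (a i), forall i, ideal_pow I n' (b i) &
           x = \sum_(i < k) a i * b i]
  end.

Definition adically_complete (m : A -> Prop) : Prop :=
  (forall x : nat -> A, (forall n, ideal_pow m n (x n.+1 - x n)) ->
     exists y, forall n, ideal_pow m n (y - x n)) /\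
  (forall y, (forall n, ideal_pow m n y) -> y = 0).

Definition finite_residue_field_char (m : A -> Prop) (p : nat) : Prop :=
  (exists s : seq A, forall x, exists2 y, y \in s & m (x - y)) /\ m p%:R.

End CommAlg.

Section Modules.
Variables (A : comNzRingType) (M : lmodType A).

Definition submodule (N : M -> Prop) : Prop :=
  [/\ N 0, (forall x y, N x -> N y -> N (x + y)) & (forall a x, N x -> N (a *: x))].

Definition whole : M -> Prop := fun _ => True.
Definition zero_sub : M -> Prop := fun x => x = 0.

Definition subquot_fg (N N' : M -> Prop) : Prop :=
  exists s : seq M, (forall i, N s`_i) /\
    forall x, N x -> exists c : 'I_(size s) -> A,
      N' (x - \sum_(i < size s) c i *: s`_i).

(* q is in the support of the subquotient N/N', i.e. (N/N')_q <> 0 *)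
Definition in_support (N N' : M -> Prop) (q : A -> Prop) : Prop :=
  exists x, N x /\ forall s, ~ q s -> ~ N' (s *: x).

Definition pseudo_null_subquot (N N' : M -> Prop) : Prop :=
  subquot_fg N N' /\
  forall q, prime_ideal q -> in_support N N' q -> height_ge q 2.

Definition pseudo_null (N : M -> Prop) : Prop := pseudo_null_subquot N zero_sub.

Definition ideal_mod (I : A -> Prop) (N : M -> Prop) (x : M) : Prop :=
  exists k (a : 'I_k -> A) (y : 'I_k -> M),
    [/\ forall i, I (a i), forall i, N (y i) & x = \sum_(i < k) a i *: y i].

Definition torsion_sub (I : A -> Prop) (N : M -> Prop) (x : M) : Prop :=
  N x /\ forall a, I a -> a *: x = 0.

Definition max_pseudo_null (N : M -> Prop) : Prop :=
  [/\ submodule N, pseudo_null N &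
      forall T, submodule T -> pseudo_null T -> forall x, T x -> N x].

End Modules.

From HB Require Import structures.
From mathcomp Require Import all_boot all_order all_algebra.
From mathcomp Require Import boolp.
Import GRing.Theory.
Local Open Scope ring_scope.
Set Implicit Arguments.
Unset Strict Implicit.

(* Let x be killed by g.  Every prime q in the support of the cyclic module
   Lambda x contains g, and there x is nonzero in the localization Q_q.  By
   Nakayama's lemma over the local ring Lambda_q (whose maximal ideal contains
   g) the localization of Q/gQ at q is then nonzero, so q has height >= 2 as
   Q/gQ is pseudo-null.  Hence Lambda x is pseudo-null and lies in S. *)

Section PrimeIdeal.
Variables (A : comNzRingType) (q : A -> Prop).
Hypothesis q_prime : prime_ideal q.

Lemma prime_ideal_notin_prod (I : Type) (r : seq I) (P : pred I) (F : I -> A) :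
  (forall i, P i -> ~ q (F i)) -> ~ q (\prod_(i <- r | P i) F i).
Proof.
case: q_prime => _ q1 qM notinF.
by apply: (big_ind (fun x => ~ q x)) => // a b na nb /qM [].
Qed.

Lemma prime_ideal_notin_exp (t : A) n : ~ q t -> ~ q (t ^+ n).
Proof.
move=> nqt; rewrite -[n]card_ord -prodr_const.
exact: prime_ideal_notin_prod.
Qed.

Lemma prime_ideal_notin_addMr (t c g : A) : q g -> ~ q t -> ~ q (t + c * g).
Proof.
case: q_prime => -[_ qD qM] _ _ qg nqt qtcg; apply: nqt.
by rewrite -(addrK (c * g) t) -mulNr; apply: qD => //; apply: qM.
Qed.

End PrimeIdeal.

Lemma det_scalar_subZ (A : comNzRingType) n (t g : A) (C : 'M[A]_n) :
  exists c, \det (t%:M - g *: C) = t ^+ n + c * g.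
Proof.
pose P : 'M[{poly A}]_n := (t%:P)%:M - 'X *: map_mx polyC C.
have evalP x : \det (t%:M - x *: C) = (\det P).[x].
  rewrite -horner_evalE -det_map_mx; congr (\det _); apply/matrixP => i j.
  by rewrite !mxE /= horner_evalE !hornerE hornerMn hornerC.
exists (drop_poly 1 (\det P)).[g].
have detP0 : (\det P)`_0 = t ^+ n.
  by rewrite -horner_coef0 -evalP scale0r subr0 det_scalar.
rewrite evalP -{1}(poly_take_drop 1 (\det P)) hornerD hornerM hornerXn expr1.
rewrite [take_poly 1 _]size1_polyC ?size_take_poly // hornerC coef_take_poly //.
by rewrite detP0.
Qed.

Section Modules.
Variables (A : comNzRingType) (Q : lmodType A).

Lemma ideal_mod_principal (g : A) (v : Q) :
  ideal_mod (principal_ideal g) (@whole _ Q) v -> exists w, v = g *: w.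
Proof.
case=> k [a] [y] [Ha _ ->].
have [b Hb] := @choice _ _ (fun i (c : A) => a i = c * g) Ha.
exists (\sum_(i < k) b i *: y i); rewrite scaler_sumr; apply: eq_bigr => i _.
by rewrite Hb scalerA mulrC.
Qed.

Lemma sum_scale_delta n (e : 'I_n -> Q) i : \sum_(j < n) (i == j)%:R *: e j = e i.
Proof.
rewrite (bigD1 i) //= eqxx scale1r big1 ?addr0 // => j /negbTE.
by rewrite eq_sym => ->; rewrite scale0r.
Qed.

(* The determinant trick: apply the adjugate of M to the relations. *)
Lemma det_scale_eq0 n (M : 'M[A]_n) (e : 'I_n -> Q) :
  (forall i, \sum_(j < n) M i j *: e j = 0) -> forall i, \det M *: e i = 0.
Proof.
move=> Me0 i.
have -> : \det M *: e i = \sum_(j < n) (\adj M *m M) i j *: e j.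
  rewrite mul_adj_mx -sum_scale_delta scaler_sumr; apply: eq_bigr => j _.
  by rewrite mxE scalerA mulrC mulr_natl.
under eq_bigr do rewrite mxE scaler_suml.
rewrite exchange_big big1 //= => k _.
by under eq_bigr do rewrite -scalerA; rewrite -scaler_sumr Me0 scaler0.
Qed.

Lemma local_nakayama (q : A -> Prop) (g : A) :
  subquot_fg (@whole _ Q) (@zero_sub _ Q) -> prime_ideal q -> q g ->
  (forall z : Q, exists s, ~ q s /\ exists w, s *: z = g *: w) ->
  exists2 s, ~ q s & forall y : Q, s *: y = 0.
Proof.
move=> [es [_ span]] qP qg locally_gQ.
have span' x : exists c : 'I_(size es) -> A, x = \sum_i c i *: es`_i.
  by have [c /eqP] := span x I; rewrite subr_eq0 => /eqP; exists c.
set n := size es; pose e (i : 'I_n) := es`_i.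
have [sf sfP] := @choice _ _ (fun i s => ~ q s /\ exists w, s *: e i = g *: w)
  (fun i => locally_gQ (e i)).
(* One common denominator for all generators gives relations t e = g C e. *)
pose t := \prod_(i < n) sf i.
have nqt : ~ q t by apply: prime_ideal_notin_prod => // i _; case: (sfP i).
have te i : exists c : 'I_n -> A, t *: e i = g *: \sum_j c j *: e j.
  have [_ [w sw]] := sfP i; have [c wc] := span' w.
  exists (fun j => (\prod_(k < n | k != i) sf k) * c j).
  rewrite /t (bigD1 i) //= mulrC -scalerA sw wc scalerA mulrC -scalerA.
  by congr (_ *: _); rewrite scaler_sumr; apply: eq_bigr => j _; rewrite scalerA.
have [C CP] := @choice _ _ (fun i (c : 'I_n -> A) => t *: e i = g *: \sum_j c j *: e j) te.
pose M : 'M[A]_n := t%:M - g *: \matrix_(i, j) C i j.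
have Me0 i : \sum_j M i j *: e j = 0.
  under eq_bigr do rewrite !mxE scalerBl -mulr_natl -!scalerA.
  by rewrite sumrB sum_scale_delta CP scaler_sumr subrr.
have [c detM] := det_scalar_subZ t g (\matrix_(i, j) C i j).
exists (\det M); first by rewrite detM; apply: prime_ideal_notin_addMr;
  last exact: prime_ideal_notin_exp.
move=> y; have [c' ->] := span' y; rewrite scaler_sumr big1 // => j _.
by rewrite scalerA mulrC -scalerA (det_scale_eq0 Me0) scaler0.
Qed.

Lemma in_support_quotient (q : A -> Prop) (g : A) (y : Q) :
  subquot_fg (@whole _ Q) (@zero_sub _ Q) -> prime_ideal q -> q g ->
  (forall s, ~ q s -> s *: y <> 0) ->
  in_support (@whole _ Q) (ideal_mod (principal_ideal g) (@whole _ Q)) q.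
Proof.
move=> Qfg qP qg y_nz; apply: contrapT => not_supp.
have [|s nqs sQ0] := local_nakayama Qfg qP qg; last exact: y_nz s nqs (sQ0 y).
move=> z; apply: contrapT => z_nz; apply: not_supp; exists z; split=> // s nqs.
by move/ideal_mod_principal => gz; apply: z_nz; exists s.
Qed.

Definition cyclic_sub (x : Q) (y : Q) : Prop := exists a, y = a *: x.

Lemma submodule_cyclic x : submodule (cyclic_sub x).
Proof.
split; first by exists 0; rewrite scale0r.
- by move=> _ _ [a ->] [b ->]; exists (a + b); rewrite scalerDl.
- by move=> c _ [a ->]; exists (c * a); rewrite scalerA.
Qed.

Lemma fg_cyclic x : subquot_fg (cyclic_sub x) (@zero_sub _ Q).
Proof.
exists [:: x]; split.
  by case=> [|[|i]] /=; [exists 1; rewrite scale1r | exists 0; rewrite scale0r..].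
by move=> _ [a ->]; exists (fun _ => a); rewrite /zero_sub big_ord1 subrr.
Qed.

Lemma pseudo_null_cyclic_torsion (g : A) (x : Q) :
  subquot_fg (@whole _ Q) (@zero_sub _ Q) ->
  pseudo_null_subquot (@whole _ Q) (ideal_mod (principal_ideal g) (@whole _ Q)) ->
  g *: x = 0 -> pseudo_null (cyclic_sub x).
Proof.
move=> Qfg [_ QgQ_ht] gx0; split; first exact: fg_cyclic.
move=> q qP [_ [[a ->] ax_nz]]; apply: QgQ_ht => //.
apply: (in_support_quotient Qfg qP _ ax_nz).
apply: contrapT => nqg; apply: (ax_nz g nqg).
by rewrite scalerA mulrC -scalerA gx0 scaler0.
Qed.

End Modules.

Theorem lemma3p3 (p : nat) (R : comNzRingType) (mR : R -> Prop) (d : nat) :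
  prime p ->
  regular_local_ring mR d -> (0 < d)%N ->
  adically_complete mR ->
  finite_residue_field_char mR p ->
  forall (Q : lmodType (Lambda R)) (g : Lambda R),
    subquot_fg (@whole _ Q) (@zero_sub _ Q) ->
    prime_ideal (principal_ideal g) ->
    pseudo_null_subquot (@whole _ Q) (ideal_mod (principal_ideal g) (@whole _ Q)) ->
    forall S : Q -> Prop, max_pseudo_null S ->
      forall x : Q,
        torsion_sub (principal_ideal g) (@whole _ Q) x <->
        torsion_sub (principal_ideal g) S x.
Proof.
move=> _ _ _ _ _ Q g Qfg _ QgQ_pn S [_ _ S_max] x; split; last by case.
case=> _ gx0; split=> //.
have gx : g *: x = 0 by apply: gx0; exists 1; rewrite mul1r.
apply: (S_max (cyclic_sub x)); first exact: submodule_cyclic.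
  exact: pseudo_null_cyclic_torsion gx.
by exists 1; rewrite scale1r.
Qed.
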